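(* Let $(E,(\cdot,\cdot),\mathcal H)$ be an extended affine Lie algebra with root system $R$, let $\hat E=\mathcal H_R+E_c$ be as in the context and $\hat E^{iso}:=\big(\sum_{0\neq\sigma\in R^0}E_\sigma\big)\cap E_c$. The following are equivalent: (a) the restriction of $(\cdot,\cdot)$ to $\hat E$ is non-degenerate; (b) the restriction of $(\cdot,\cdot)$ to $\hat E^{iso}$ is non-degenerate; (c) $Z(E_c)\subseteq\mathcal H$.
   Context: All Lie algebras are over $\mathbb C$. An extended affine Lie algebra (EALA) is a triple $(E,(\cdot,\cdot),\mathcal H)$ where $E$ is a Lie algebra, $\mathcal H$ a subalgebra and $(\cdot,\cdot)$ a bilinear form on $E$ such that: (EA1) symmetric, non-degenerate, invariant form; (EA2) $\mathcal H$ finite-dimensional, $E=\bigoplus_{\alpha\in\mathcal H^*}E_\alpha$, $E_\alpha=\{x:[h,x]=\alpha(h)x\ \forall h\in\mathcal H\}$, $E_0=\mathcal H$; root system $R=\{\alpha:E_\alpha\neq0\}$; $t_\alpha\in\mathcal H$ given by $\alpha(h)=(h,t_\alpha)$, $(\alpha,\beta):=(t_\alpha,t_\beta)$, $R^\times=\{\alpha\in R:(\alpha,\alpha)\neq0\}$, $R^0=R\setminus R^\times$; (EA3) $\mathrm{ad}\,x$ locally nilpotent for $x\in E_\alpha$, $\alpha\in R^\times$; (EA4) $R$ discrete; (EA5) $R^\times$ connected (not a union of two nonempty mutually orthogonal subsets) and every isotropic root non-isolated. Let $\mathcal V=\mathrm{span}_{\mathbb R}R$, $\mathcal V^0=\mathrm{span}_{\mathbb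 R}R^0$; the image $\bar R$ of $R$ in $\mathcal V/\mathcal V^0$ is an irreducible finite root system, assumed reduced. The core $E_c$ is the subalgebra generated by the $E_\alpha$, $\alpha\in R^\times$, and $Z(E_c)$ is its center. Fix a finite root system $\dot R\subseteq R$ (containing $0$) with $R\subseteq\dot R+\mathcal V^0$ mapping bijectively onto $\bar R$. Put $\dot{\mathcal H}=\sum_{\dot\alpha\in\dot R}\mathbb Ct_{\dot\alpha}$, $\mathcal H_c=\sum_{\alpha\in R^\times}\mathbb Ct_\alpha$, $\mathcal H^0=\sum_{\sigma\in R^0}\mathbb Ct_\sigma$. Choose $\hat{\mathcal H}^0$ in the orthogonal complement of $\dot{\mathcal H}$ in $\mathcal H$ with $\dim\hat{\mathcal H}^0=\dim\mathcal H^0$, $(\hat{\mathcal H}^0,\hat{\mathcal H}^0)=0$ and the form non-degenerate on $\mathcal H^0\oplus\hat{\mathcal H}^0$; set $\mathcal H_R=\mathcal H_c\oplus\hat{\mathcal H}^0$ and $\hat E=\mathcal H_R+E_c$. *)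

From mathcomp Require Import all_boot all_algebra complex reals.
Set Implicit Arguments. Unset Strict Implicit. Unset Printing Implicit Defensive.
Import GRing.Theory Num.Theory.
Local Open Scope ring_scope.

Definition lie_bracket (K : fieldType) (E : lmodType K) (br : E -> E -> E) : Prop :=
  [/\ (forall (a : K) (x y z : E), br (a *: x + y) z = a *: br x z + br y z),
      (forall (a : K) (x y z : E), br z (a *: x + y) = a *: br z x + br z y),
      (forall x : E, br x x = 0) &
      (forall x y z : E, br x (br y z) + br y (br z x) + br z (br x y) = 0)].

Definition EA1_form (K : fieldType) (E : lmodType K) (br : E -> E -> E)
    (form : E -> E -> K) : Prop :=
  [/\ (forall (a : K) (x y z : E), form (a *: x + y) z = a * form x z + form y z),
      (forall x y : E, form x y = form y x),
      (forall x y z : E, form (br x y) z = form x (br y z)) &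
      (forall x : E, (forall y : E, form x y = 0) -> x = 0)].

Definition nondeg_on (K : fieldType) (E : lmodType K) (form : E -> E -> K)
    (S : E -> Prop) : Prop :=
  forall x, S x -> (forall y, S y -> form x y = 0) -> x = 0.

Section EALA.
Variable R : realType.
Local Notation C := (R[i]).
Variable E : lmodType C.
Variable br : E -> E -> E.
Variable form : E -> E -> C.
Variable n : nat.
(* The Cartan subalgebra H is given through a basis  h 0, ..., h (n-1);
   H^* is identified with row vectors 'rV_n via  alpha |-> (alpha (h i))_i. *)
Variable h : 'I_n -> E.

Definition hv (c : 'rV[C]_n) : E := \sum_(i < n) c 0 i *: h i.
Definition inH (x : E) : Prop := exists c : 'rV[C]_n, x = hv c.

Definition rootsp (alpha : 'rV[C]_n) (x : E) : Prop :=
  forall i : 'I_n, br (h i) x = alpha 0 i *: x.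

Definition isroot (alpha : 'rV[C]_n) : Prop := exists2 x, rootsp alpha x & x <> 0.

Definition gramH : 'M[C]_n := \matrix_(i, j) form (h i) (h j).

(* t_alpha : the element of H with alpha(x) = (x, t_alpha) for x in H
   (the form is non-degenerate on H = E_0, so gramH is invertible) *)
Definition tcoord (alpha : 'rV[C]_n) : 'rV[C]_n := alpha *m invmx gramH.
Definition tE (alpha : 'rV[C]_n) : E := hv (tcoord alpha).

Definition rform (alpha beta : 'rV[C]_n) : C := form (tE alpha) (tE beta).

Definition nonisoroot (alpha : 'rV[C]_n) : Prop := isroot alpha /\ rform alpha alpha != 0.
Definition isoroot (alpha : 'rV[C]_n) : Prop := isroot alpha /\ rform alpha alpha = 0.

Definition inV0 (v : 'rV[C]_n) : Prop :=
  exists s : seq (R * 'rV[C]_n),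
    (forall p, p \in s -> isoroot p.2) /\
    v = \sum_(p <- s) ((p.1)%:C)%C *: p.2.

Inductive inEc : E -> Prop :=
  | Ec_gen alpha x : nonisoroot alpha -> rootsp alpha x -> inEc x
  | Ec_zero : inEc 0
  | Ec_add x y : inEc x -> inEc y -> inEc (x + y)
  | Ec_scale (a : C) x : inEc x -> inEc (a *: x)
  | Ec_br x y : inEc x -> inEc y -> inEc (br x y).

Definition inZEc (x : E) : Prop := inEc x /\ (forall y, inEc y -> br x y = 0).

Definition in_tspan (P : 'rV[C]_n -> Prop) (x : E) : Prop :=
  exists s : seq (C * 'rV[C]_n),
    (forall p, p \in s -> P p.2) /\ x = \sum_(p <- s) p.1 *: tE p.2.

Definition inHc : E -> Prop := in_tspan nonisoroot.
Definition inH0 : E -> Prop := in_tspan isoroot.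

(* the extended affine Lie algebra axioms (EA1)-(EA5), together with the
   standing assumption that the finite root system \bar R is reduced *)
Definition is_EALA : Prop :=
  [/\ lie_bracket br,
      EA1_form br form,
      [/\
      (forall c : 'rV[C]_n, hv c = 0 -> c = 0),
      (forall i j, inH (br (h i) (h j))),
      (forall x : E, exists s : seq ('rV[C]_n * E),
          [/\ uniq (map fst s), (forall p, p \in s -> rootsp p.1 p.2) &
              x = \sum_(p <- s) p.2]) &
      (forall x : E, rootsp 0 x <-> inH x)] &
      [/\
          (forall alpha x y, nonisoroot alpha -> rootsp alpha x ->
              exists k : nat, iter k (br x) y = 0),
          (forall alpha, isroot alpha -> exists2 e : C, 0 < e &
              forall beta, isroot beta -> beta <> alpha ->
                exists i : 'I_n, e <= `|beta 0 i - alpha 0 i|),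
          (~ exists A B : 'rV[C]_n -> Prop,
              [/\ (forall a, nonisoroot a <-> A a \/ B a),
                  (exists a, A a), (exists b, B b) &
                  (forall a b, A a -> B b -> rform a b = 0)]),
          (forall sigma, isoroot sigma ->
              exists2 alpha, nonisoroot alpha & isroot (alpha + sigma)) &
          (* \bar R is reduced *)
          (forall alpha beta, nonisoroot alpha -> isroot beta ->
              ~ inV0 (beta - 2%:R *: alpha))]].

Definition fin_root_system (S : seq 'rV[C]_n) : Prop :=
  [/\ 0 \in S,
      (forall a, a \in S -> a != 0 -> 0 < rform a a) &
      (forall a b, a \in S -> b \in S -> b != 0 ->
         (exists k : int, 2%:R * rform a b / rform b b = k%:~R) /\
         a - (2%:R * rform a b / rform b b) *: b \in S)].

(* \dot R : a finite root system inside R with R \subseteq \dot R + V^0,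
   mapping bijectively onto \bar R *)
Definition is_dotR (Rd : seq 'rV[C]_n) : Prop :=
  [/\ fin_root_system Rd,
      (forall a, a \in Rd -> isroot a),
      (forall alpha, isroot alpha -> exists2 a, a \in Rd & inV0 (alpha - a)) &
      (forall a b, a \in Rd -> b \in Rd -> inV0 (a - b) -> a = b)].

Definition inHdot (Rd : seq 'rV[C]_n) : E -> Prop := in_tspan (fun a => a \in Rd).

Definition inHhat0 (m : nat) (Q : 'M[C]_(m, n)) (x : E) : Prop :=
  exists u : 'rV[C]_m, x = hv (u *m Q).

Definition dimH0 (d : nat) : Prop :=
  exists B : 'M[C]_(d, n),
    [/\ row_free B, (forall i, inH0 (hv (row i B))) &
        (forall x, inH0 x -> exists u : 'rV[C]_d, x = hv (u *m B))].

Definition is_hatH0 (Rd : seq 'rV[C]_n) (m : nat) (Q : 'M[C]_(m, n)) : Prop :=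
  [/\ (forall x y, inHhat0 Q x -> inHdot Rd y -> form x y = 0),
      dimH0 (\rank Q),
      (forall x y, inHhat0 Q x -> inHhat0 Q y -> form x y = 0),
      (forall x, inHhat0 Q x -> inH0 x -> x = 0) &
      nondeg_on form (fun x => exists y z, [/\ inH0 y, inHhat0 Q z & x = y + z])].

(* \hat E = H_R + E_c,  H_R = H_c (+) \hat H^0 *)
Definition inEhat (m : nat) (Q : 'M[C]_(m, n)) (x : E) : Prop :=
  exists a b c, [/\ inHc a, inHhat0 Q b, inEc c & x = a + b + c].

Definition inEiso (x : E) : Prop :=
  inEc x /\
  exists s : seq ('rV[C]_n * E),
    (forall p, p \in s -> [/\ isoroot p.1, p.1 != 0 & rootsp p.1 p.2]) /\
    x = \sum_(p <- s) p.2.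

End EALA.

(* Everything is read off root-space decompositions.  Subspaces stable under
   [ad H] are spanned by their root components, so [Z(E_c)] lies in [H] iff
   central root vectors of nonzero weight vanish.  Such a vector is
   orthogonal to [E_c] (by invariance) and to [H] (by weights), so it lies in
   the radical of [\hat E], and in that of [\hat E^iso] when its weight is
   isotropic; for a nonisotropic weight it is orthogonal to all of [E].  Hence
   (a) or (b) implies (c).  Conversely, under (c), an element of the radical of
   [\hat E^iso], or the nonzero-weight part of one of [\hat E], is orthogonal
   to [E_c], hence central, hence in [H], hence zero.  What is left of a radical
   vector of [\hat E] lies in [H_R = \dot H + H^0 + \hat H^0]: there [H^0] is
   orthogonal to [H_c] (isotropic roots are orthogonal to nonisotropic ones, by
   reflecting in [sl2]-strings and reducedness of [\bar R]), [H^0] pairs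
   nondegenerately with [\hat H^0], and the form is nondegenerate on [\dot H]
   by averaging over the Weyl group of [\dot R]. *)

From mathcomp Require Import all_boot all_algebra complex reals.
From mathcomp Require Import boolp ring zify.
Set Implicit Arguments. Unset Strict Implicit. Unset Printing Implicit Defensive.
Import GRing.Theory Num.Theory.
Local Open Scope ring_scope.

Section LinearMapFacts.
Variables (K : pzRingType) (U V : lmodType K) (f : U -> V).
Hypothesis f_lin : forall a x y, f (a *: x + y) = a *: f x + f y.

Lemma lin0 : f 0 = 0.
Proof. by apply: (addrI (f 0)); rewrite -{1}(scale1r (f 0)) -f_lin scale1r !addr0. Qed.

Lemma linD x y : f (x + y) = f x + f y.
Proof. by have := f_lin 1 x y; rewrite !scale1r. Qed.

Lemma linZ a x : f (a *: x) = a *: f x.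
Proof. by rewrite -[a *: x]addr0 f_lin lin0 addr0. Qed.

Lemma linN x : f (- x) = - f x.
Proof. by rewrite -scaleN1r linZ scaleN1r. Qed.

Lemma linB x y : f (x - y) = f x - f y.
Proof. by rewrite linD linN. Qed.

Lemma lin_sum (I : Type) (s : seq I) (F : I -> U) :
  f (\sum_(i <- s) F i) = \sum_(i <- s) f (F i).
Proof. by elim: s => [|i s IH]; rewrite ?big_nil ?lin0 // !big_cons linD IH. Qed.

End LinearMapFacts.

Section LinearFormFacts.
Variables (K : comPzRingType) (U : lmodType K) (f : U -> K).
Hypothesis f_lin : forall a x y, f (a *: x + y) = a * f x + f y.

Lemma slin0 : f 0 = 0.
Proof. exact: (@lin0 K U K^o f f_lin). Qed.
Lemma slinD x y : f (x + y) = f x + f y.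
Proof. exact: (@linD K U K^o f f_lin). Qed.
Lemma slinZ a x : f (a *: x) = a * f x.
Proof. exact: (@linZ K U K^o f f_lin). Qed.
Lemma slinN x : f (- x) = - f x.
Proof. exact: (@linN K U K^o f f_lin). Qed.
Lemma slinB x y : f (x - y) = f x - f y.
Proof. exact: (@linB K U K^o f f_lin). Qed.
Lemma slin_sum (I : Type) (s : seq I) (F : I -> U) :
  f (\sum_(i <- s) F i) = \sum_(i <- s) f (F i).
Proof. exact: (@lin_sum K U K^o f f_lin). Qed.

End LinearFormFacts.

Section WeylAverage.
Variables (K : numFieldType) (V : lmodType K) (rf : V -> V -> K).
Hypothesis rf_linl : forall z a x y, rf (a *: x + y) z = a * rf x z + rf y z.
Variable S : seq V.
Hypothesis S_anisotropic : forall b, b \in S -> b != 0 -> rf b b != 0.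
Hypothesis S_reflection_closed : forall a b, a \in S -> b \in S -> b != 0 ->
  a - (2%:R * rf a b / rf b b) *: b \in S.

Definition reflection b x := x - (2%:R * rf x b / rf b b) *: b.

Definition weyl_word (w : seq V) := all [pred b | (b \in S) && (b != 0)] w.
Definition weyl_act (w : seq V) x := foldr reflection x w.
Definition weyl_image w := map (weyl_act w) S.

Definition in_span x := exists s : seq (K * V),
  (forall p, p \in s -> p.2 \in S) /\ x = \sum_(p <- s) p.1 *: p.2.

Lemma reflection_lin b a x y :
  reflection b (a *: x + y) = a *: reflection b x + reflection b y.
Proof.
rewrite /reflection rf_linl scalerBr scalerA addrACA -opprD -scalerDl.
by congr (_ - _ *: _); ring.
Qed.

Lemma weyl_act_lin w a x y :
  weyl_act w (a *: x + y) = a *: weyl_act w x + weyl_act w y.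
Proof. by elim: w => //= b w IH; rewrite IH reflection_lin. Qed.

Lemma weyl_act_root w a : weyl_word w -> a \in S -> weyl_act w a \in S.
Proof.
elim: w => //= b w IH /andP [/andP [Sb b_neq0] Hw] Sa.
by apply: S_reflection_closed => //; apply: IH.
Qed.

Lemma reflectionK b : b \in S -> b != 0 -> involutive (reflection b).
Proof.
move=> Sb b_neq0 x; have bb_neq0 := S_anisotropic Sb b_neq0.
have rf_refl : rf (reflection b x) b = - rf x b.
  by rewrite /reflection (slinB (rf_linl b)) (slinZ (rf_linl b)); field.
rewrite {1}/reflection rf_refl /reflection -addrA -opprD -scalerDl.
by rewrite mulrN mulNr addrN scale0r oppr0 addr0.
Qed.

Lemma weyl_act_orthogonal w x : weyl_word w ->
  (forall b, b \in S -> rf x b = 0) -> weyl_act w x = x.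
Proof.
move=> + x_perp; elim: w => //= b w IH /andP [/andP [Sb _] Hw].
by rewrite IH // /reflection x_perp ?mulr0 ?mul0r ?scale0r ?subr0.
Qed.

Lemma weyl_act_span w w' x : weyl_image w = weyl_image w' -> in_span x ->
  weyl_act w x = weyl_act w' x.
Proof.
move=> /eq_in_map eq_ww' [s [Ss ->]].
rewrite !(lin_sum (weyl_act_lin _)); apply: eq_big_seq => p /Ss Sp.
by rewrite !(linZ (weyl_act_lin _)) eq_ww'.
Qed.

Definition weyl_imaged t := exists2 w, weyl_word w & weyl_image w = t.

Definition reflect_image b (t : seq V) :=
  [seq nth 0 t (index (reflection b a) S) | a <- S].

Lemma weyl_image_rcons w b : b \in S -> b != 0 ->
  weyl_image (rcons w b) = reflect_image b (weyl_image w).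
Proof.
move=> Sb b_neq0; rewrite /weyl_image /reflect_image; apply/eq_in_map => a Sa.
have Sba := S_reflection_closed Sa Sb b_neq0.
by rewrite (nth_map 0) ?index_mem // nth_index // /weyl_act -cats1 foldr_cat.
Qed.

Lemma weyl_word_rcons w b : weyl_word w -> b \in S -> b != 0 -> weyl_word (rcons w b).
Proof.
by move=> Hw Sb b_neq0; rewrite /weyl_word -cats1 all_cat -/(weyl_word w) Hw /= Sb b_neq0.
Qed.

Lemma reflect_imaged b t : b \in S -> b != 0 -> weyl_imaged t ->
  weyl_imaged (reflect_image b t).
Proof.
move=> Sb b_neq0 [w Hw <-]; exists (rcons w b); first exact: weyl_word_rcons.
exact: weyl_image_rcons.
Qed.

Lemma reflect_imageK b t : b \in S -> b != 0 -> weyl_imaged t ->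
  reflect_image b (reflect_image b t) = t.
Proof.
move=> Sb b_neq0 [w Hw <-].
rewrite -!weyl_image_rcons ?weyl_word_rcons //; apply/eq_in_map => a Sa.
by rewrite /weyl_act -!cats1 -catA !foldr_cat /= reflectionK.
Qed.

Fixpoint seqs_over (L : seq V) k : seq (seq V) :=
  if k is k'.+1 then [seq x :: t | x <- L, t <- seqs_over L k'] else [:: [::]].

Lemma mem_seqs_over L t : all (mem L) t -> t \in seqs_over L (size t).
Proof.
elim: t => [|x t IH] /=; first by rewrite inE.
by case/andP=> Lx Lt; apply/allpairsP; exists (x, t); split=> //; apply: IH.
Qed.

(* Words act on the span of [S] through their images of [S], which are
   finitely many: averaging over these images replaces averaging over the
   Weyl group. *)
Definition weyl_images :=
  undup [seq t <- seqs_over S (size S) | `[< weyl_imaged t >]].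

Lemma mem_weyl_images t : (t \in weyl_images) <-> weyl_imaged t.
Proof.
rewrite mem_undup mem_filter; split; first by case/andP => /asboolP.
move=> Ht; apply/andP; split; first exact/asboolP.
case: Ht => w Hw <-; rewrite -[size S](size_map (weyl_act w)).
by apply: mem_seqs_over; apply/allP => _ /mapP [a Sa ->]; apply: weyl_act_root.
Qed.

Definition word_of t : seq V :=
  if pselect (weyl_imaged t) is left Ht then sval (cid2 Ht) else [::].

Lemma word_ofP t : weyl_imaged t -> weyl_word (word_of t) /\ weyl_image (word_of t) = t.
Proof. by rewrite /word_of; case: pselect => // Ht _; case: (cid2 Ht). Qed.

Definition weyl_average x := \sum_(t <- weyl_images) weyl_act (word_of t) x.

Lemma weyl_average_lin a x y :
  weyl_average (a *: x + y) = a *: weyl_average x + weyl_average y.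
Proof.
rewrite /weyl_average scaler_sumr -big_split; apply: eq_bigr => t _.
exact: weyl_act_lin.
Qed.

Lemma perm_reflect_images b : b \in S -> b != 0 ->
  perm_eq weyl_images (map (reflect_image b) weyl_images).
Proof.
move=> Sb b_neq0; rewrite perm_sym; apply: uniq_perm; last first.
- move=> t; apply/mapP/idP => [[t' /mem_weyl_images Ht' ->]|/mem_weyl_images Ht].
    by apply/mem_weyl_images; apply: reflect_imaged.
  exists (reflect_image b t); last by rewrite reflect_imageK.
  by apply/mem_weyl_images; apply: reflect_imaged.
- exact: undup_uniq.
rewrite map_inj_in_uniq ?undup_uniq // => t1 t2 /mem_weyl_images H1 /mem_weyl_images H2 H.
by rewrite -(reflect_imageK Sb b_neq0 H1) H reflect_imageK.
Qed.

Lemma weyl_average_reflection b x : b \in S -> b != 0 -> in_span x ->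
  weyl_average (reflection b x) = weyl_average x.
Proof.
move=> Sb b_neq0 Hx; rewrite /weyl_average [RHS](perm_big _ (perm_reflect_images Sb b_neq0)).
rewrite big_map; apply: eq_big_seq => t /mem_weyl_images Ht.
have [Hw Hwt] := word_ofP Ht.
have [_ Hwt'] := word_ofP (reflect_imaged Sb b_neq0 Ht).
have -> : weyl_act (word_of t) (reflection b x) = weyl_act (rcons (word_of t) b) x.
  by rewrite /weyl_act -cats1 foldr_cat.
by apply: weyl_act_span => //; rewrite weyl_image_rcons // Hwt Hwt'.
Qed.

Lemma in_span_root b : b \in S -> in_span b.
Proof.
move=> Sb; exists [:: (1, b)]; split; last by rewrite big_seq1 scale1r.
by move=> p; rewrite inE => /eqP ->.
Qed.

(* [s_b b = - b], and the average is invariant under [s_b]. *)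
Lemma weyl_average_root b : b \in S -> weyl_average b = 0.
Proof.
move=> Sb; have [->|b_neq0] := eqVneq b 0; first exact: (lin0 weyl_average_lin).
have := weyl_average_reflection Sb b_neq0 (in_span_root Sb).
rewrite /reflection mulfK ?S_anisotropic // scaler_nat mulr2n opprD addrA subrr add0r.
rewrite (linN weyl_average_lin) => /eqP; rewrite eq_sym -addr_eq0 -mulr2n -scaler_nat.
by rewrite scaler_eq0 pnatr_eq0 => /eqP.
Qed.

Lemma weyl_average_span u : in_span u -> weyl_average u = 0.
Proof.
case=> s [Ss ->]; rewrite (lin_sum weyl_average_lin) big_seq big1 // => p /Ss Sp.
by rewrite (linZ weyl_average_lin) weyl_average_root ?scaler0.
Qed.

Lemma weyl_images_neq_nil : weyl_images != [::].
Proof.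
have : weyl_image [::] \in weyl_images by apply/mem_weyl_images; exists [::].
by case: weyl_images.
Qed.

Lemma span_orthogonal_eq0 u : in_span u -> (forall b, b \in S -> rf u b = 0) -> u = 0.
Proof.
move=> span_u u_perp.
have : weyl_average u = u *+ size weyl_images.
  rewrite /weyl_average (eq_big_seq (fun=> u)) => [|t /mem_weyl_images Ht]; last first.
    by have [Hw _] := word_ofP Ht; apply: weyl_act_orthogonal.
  by elim: weyl_images => [|t ts IH]; rewrite ?big_nil ?big_cons ?IH ?mulrS.
rewrite weyl_average_span // -scaler_nat => /esym/eqP.
by rewrite scaler_eq0 pnatr_eq0 size_eq0 (negbTE weyl_images_neq_nil) => /eqP.
Qed.

End WeylAverage.

Section LieFacts.
Variables (K : fieldType) (E : lmodType K) (br : E -> E -> E).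
Hypothesis br_lie : lie_bracket br.

Lemma br_linl z a x y : br (a *: x + y) z = a *: br x z + br y z.
Proof. by case: br_lie. Qed.
Lemma br_linr z a x y : br z (a *: x + y) = a *: br z x + br z y.
Proof. by case: br_lie. Qed.

Lemma br0l z : br 0 z = 0.
Proof. exact: (lin0 (f := br^~ z) (br_linl z)). Qed.
Lemma br0r z : br z 0 = 0.
Proof. exact: (lin0 (f := br z) (br_linr z)). Qed.
Lemma brDl x y z : br (x + y) z = br x z + br y z.
Proof. exact: (linD (f := br^~ z) (br_linl z)). Qed.
Lemma brDr x y z : br z (x + y) = br z x + br z y.
Proof. exact: (linD (f := br z) (br_linr z)). Qed.
Lemma brZl a x z : br (a *: x) z = a *: br x z.
Proof. exact: (linZ (f := br^~ z) (br_linl z)). Qed.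
Lemma brZr a x z : br z (a *: x) = a *: br z x.
Proof. exact: (linZ (f := br z) (br_linr z)). Qed.
Lemma brNl x z : br (- x) z = - br x z.
Proof. exact: (linN (f := br^~ z) (br_linl z)). Qed.
Lemma brNr x z : br z (- x) = - br z x.
Proof. exact: (linN (f := br z) (br_linr z)). Qed.
Lemma brBl x y z : br (x - y) z = br x z - br y z.
Proof. exact: (linB (f := br^~ z) (br_linl z)). Qed.
Lemma br_suml (I : Type) (s : seq I) (F : I -> E) z :
  br (\sum_(i <- s) F i) z = \sum_(i <- s) br (F i) z.
Proof. exact: (lin_sum (f := br^~ z) (br_linl z)). Qed.
Lemma br_sumr (I : Type) (s : seq I) (F : I -> E) z :
  br z (\sum_(i <- s) F i) = \sum_(i <- s) br z (F i).
Proof. exact: (lin_sum (f := br z) (br_linr z)). Qed.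

Lemma brxx x : br x x = 0.
Proof. by case: br_lie. Qed.

Lemma brC x y : br x y = - br y x.
Proof.
have := brxx (x + y); rewrite brDl !brDr !brxx add0r addr0 => /eqP.
by rewrite addr_eq0 => /eqP.
Qed.

Lemma br_leibniz x y z : br x (br y z) = br (br x y) z + br y (br x z).
Proof.
have jacobi : br x (br y z) + br y (br z x) + br z (br x y) = 0 by case: br_lie.
rewrite (brC (br x y) z) (brC x z) brNr -[LHS]subr0 -jacobi.
by rewrite !opprD !addrA addrN add0r addrC.
Qed.

Variable form : E -> E -> K.
Hypothesis form_EA1 : EA1_form br form.

Lemma formC x y : form x y = form y x.
Proof. by case: form_EA1. Qed.
Lemma form_invariant x y z : form (br x y) z = form x (br y z).
Proof. by case: form_EA1. Qed.
Lemma form_nondeg x : (forall y, form x y = 0) -> x = 0.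
Proof. by case: form_EA1 => _ _ _; apply. Qed.

Lemma form_linl z a x y : form (a *: x + y) z = a * form x z + form y z.
Proof. by case: form_EA1. Qed.
Lemma form_linr z a x y : form z (a *: x + y) = a * form z x + form z y.
Proof. by rewrite !(formC z) form_linl. Qed.

Lemma form0l z : form 0 z = 0.
Proof. exact: (slin0 (f := form^~ z) (form_linl z)). Qed.
Lemma form0r z : form z 0 = 0.
Proof. exact: (slin0 (f := form z) (form_linr z)). Qed.
Lemma formDl x y z : form (x + y) z = form x z + form y z.
Proof. exact: (slinD (f := form^~ z) (form_linl z)). Qed.
Lemma formDr x y z : form z (x + y) = form z x + form z y.
Proof. exact: (slinD (f := form z) (form_linr z)). Qed.
Lemma formZl a x z : form (a *: x) z = a * form x z.
Proof. exact: (slinZ (f := form^~ z) (form_linl z)). Qed.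
Lemma formZr a x z : form z (a *: x) = a * form z x.
Proof. exact: (slinZ (f := form z) (form_linr z)). Qed.
Lemma formNr x z : form z (- x) = - form z x.
Proof. exact: (slinN (f := form z) (form_linr z)). Qed.
Lemma formBl x y z : form (x - y) z = form x z - form y z.
Proof. exact: (slinB (f := form^~ z) (form_linl z)). Qed.
Lemma form_suml (I : Type) (s : seq I) (F : I -> E) z :
  form (\sum_(i <- s) F i) z = \sum_(i <- s) form (F i) z.
Proof. exact: (slin_sum (f := form^~ z) (form_linl z)). Qed.
Lemma form_sumr (I : Type) (s : seq I) (F : I -> E) z :
  form z (\sum_(i <- s) F i) = \sum_(i <- s) form z (F i).
Proof. exact: (slin_sum (f := form z) (form_linr z)). Qed.

End LieFacts.

Lemma last_nonzero_iter (T : nmodType) (g : T -> T) y : y != 0 ->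
  (exists k, iter k g y = 0) ->
  exists p, (forall k, (k <= p)%N -> iter k g y != 0) /\ g (iter p g y) = 0.
Proof.
move=> y_neq0 g_nil.
have g_nilb : exists k, iter k g y == 0 by have [k Hk] := g_nil; exists k; apply/eqP.
case: (ex_minnP g_nilb) => [[|p]] /eqP gN min_N.
  by rewrite /= in gN; rewrite gN eqxx in y_neq0.
exists p; split=> // k k_le_p; apply/negP => /eqP gk.
by have := min_N k; rewrite gk eqxx => /(_ isT); rewrite ltnNge k_le_p.
Qed.

Section Sl2Strings.
Variables (K : numFieldType) (E : lmodType K) (br : E -> E -> E).
Hypothesis br_lie : lie_bracket br.

Local Notation br0r := (br0r br_lie).
Local Notation brZl := (brZl br_lie).
Local Notation brZr := (brZr br_lie).
Local Notation brNl := (brNl br_lie).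
Local Notation brC := (brC br_lie).
Local Notation br_leibniz := (br_leibniz br_lie).

Section Triple.
Variables e hh f : E.
Hypothesis hh_e : br hh e = 2%:R *: e.
Hypothesis hh_f : br hh f = - (2%:R *: f).
Hypothesis e_f : br e f = hh.
Hypothesis e_nilpotent : forall y, exists k, iter k (br e) y = 0.
Hypothesis f_nilpotent : forall y, exists k, iter k (br f) y = 0.

Lemma sl2_raise v mu j : br hh v = mu *: v ->
  br hh (iter j (br e) v) = (mu + 2%:R * j%:R) *: iter j (br e) v.
Proof.
move=> hh_v; elim: j => [|j IH] /=; first by rewrite mulr0 addr0.
rewrite br_leibniz hh_e IH brZl brZr -scalerDl; congr (_ *: _).
by rewrite -addn1 natrD; ring.
Qed.

Lemma sl2_lower v lam k : br e v = 0 -> br hh v = lam *: v ->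
  br hh (iter k (br f) v) = (lam - 2%:R * k%:R) *: iter k (br f) v /\
  br e (iter k.+1 (br f) v) = (k.+1%:R * (lam - k%:R)) *: iter k (br f) v.
Proof.
move=> e_v hh_v; elim: k => [|k [IH1 IH2]] /=.
  split; first by rewrite mulr0 subr0.
  by rewrite br_leibniz e_f e_v br0r addr0 hh_v mul1r subr0.
set vk := iter k (br f) v.
have hh_fvk : br hh (br f vk) = (lam - 2%:R * k.+1%:R) *: br f vk.
  rewrite br_leibniz hh_f IH1 brZr brNl brZl -scaleNr -scalerDl.
  by congr (_ *: _); rewrite -addn1 natrD; ring.
split=> //; rewrite br_leibniz e_f hh_fvk IH2 brZr -scalerDl; congr (_ *: _).
by rewrite -[k.+2]addn2 -[k.+1]addn1 !natrD; ring.
Qed.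

Lemma sl2_highest_weight v mu : v != 0 -> br hh v = mu *: v ->
  exists p q : nat, mu = q%:R - 2%:R * p%:R /\
    forall k, (k <= q)%N -> iter k (br f) (iter p (br e) v) != 0.
Proof.
move=> v_neq0 hh_v.
have [p [ep_neq0 e_top]] := last_nonzero_iter v_neq0 (e_nilpotent v).
have [q [fq_neq0 f_top]] := last_nonzero_iter (ep_neq0 p (leqnn p)) (f_nilpotent _).
exists p, q; split=> //.
have [_] := sl2_lower q e_top (sl2_raise p hh_v).
rewrite [iter q.+1 _ _]/= f_top br0r => /esym/eqP.
rewrite scaler_eq0 (negbTE (fq_neq0 q (leqnn q))) orbF mulf_eq0 pnatr_eq0 /=.
by rewrite subr_eq0 => /eqP <-; ring.
Qed.

End Triple.

(* The vector [f^(q-p) e^p v] has weight [- mu] when [p <= q]; otherwise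
   [p' <= q'] holds for the opposite triple [(f, - hh, e)], as
   [(q - 2p) + (q' - 2p') = mu - mu = 0]. *)
Lemma sl2_reflection e hh f v mu :
  br hh e = 2%:R *: e -> br hh f = - (2%:R *: f) -> br e f = hh ->
  (forall y, exists k, iter k (br e) y = 0) ->
  (forall y, exists k, iter k (br f) y = 0) ->
  v != 0 -> br hh v = mu *: v ->
  exists p q : nat, (p <= q)%N /\
    (mu = q%:R - 2%:R * p%:R /\ iter (q - p) (br f) (iter p (br e) v) != 0 \/
     - mu = q%:R - 2%:R * p%:R /\ iter (q - p) (br e) (iter p (br f) v) != 0).
Proof.
move=> hh_e hh_f e_f e_nil f_nil v_neq0 hh_v.
have [p [q [mu_pq nz]]] := sl2_highest_weight hh_e hh_f e_f e_nil f_nil v_neq0 hh_v.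
have [le_pq|lt_qp] := leqP p q.
  by exists p, q; split=> //; left; split=> //; apply: nz; rewrite leq_subr.
have hh_f' : br (- hh) f = 2%:R *: f by rewrite brNl hh_f opprK.
have hh_e' : br (- hh) e = - (2%:R *: e) by rewrite brNl hh_e.
have f_e : br f e = - hh by rewrite brC e_f.
have hh_v' : br (- hh) v = - mu *: v by rewrite brNl hh_v scaleNr.
have [p' [q' [mu_pq' nz']]] :=
  sl2_highest_weight hh_f' hh_e' f_e f_nil e_nil v_neq0 hh_v'.
exists p', q'; split; last by right; split=> //; apply: nz'; rewrite leq_subr.
have : (q + q')%:R = (2 * (p + p'))%:R :> K.
  rewrite natrM !natrD -[q%:R](subrK (2%:R * p%:R)) -[q'%:R](subrK (2%:R * p'%:R)).
  by rewrite -mu_pq -mu_pq'; ring.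
by move/eqP; rewrite eqr_nat => /eqP; lia.
Qed.

End Sl2Strings.

Lemma row_neq0_coord (K : nmodType) n (v : 'rV[K]_n) : v != 0 -> exists i, v 0 i != 0.
Proof.
move=> v_neq0; apply/existsP; apply: contraNT v_neq0 => /existsPn v0.
by apply/eqP/rowP => j; rewrite mxE; apply/eqP; rewrite -[_ == _]negbK v0.
Qed.

Section RootSpaces.
Variable R : realType.
Local Notation C := (R[i]).
Variables (E : lmodType C) (br : E -> E -> E) (form : E -> E -> C).
Variables (n : nat) (h : 'I_n -> E).
Hypothesis E_EALA : is_EALA br form h.

Local Notation rootsp := (rootsp br h).
Local Notation rf := (rform form h).
Local Notation tE := (tE form h).
Local Notation hv := (hv h).
Local Notation nonisoroot := (nonisoroot br form h).
Local Notation isoroot := (isoroot br form h).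
Local Notation isroot := (isroot br h).

Lemma eala_lie : lie_bracket br.
Proof. by case: E_EALA. Qed.
Lemma eala_form : EA1_form br form.
Proof. by case: E_EALA. Qed.
Lemma hv_inj c : hv c = 0 -> c = 0.
Proof. by case: E_EALA => _ _ [] + _ _ _ _; apply. Qed.
Lemma root_space_decomposition x : exists s : seq ('rV[C]_n * E),
  [/\ uniq (map fst s), (forall p, p \in s -> rootsp p.1 p.2) & x = \sum_(p <- s) p.2].
Proof. by case: E_EALA => _ _ [] _ _ + _ _. Qed.
Lemma rootsp0_inH x : rootsp 0 x <-> inH h x.
Proof. by case: E_EALA => _ _ [] _ _ _ + _. Qed.
Lemma ad_nilpotent alpha x y : nonisoroot alpha -> rootsp alpha x ->
  exists k : nat, iter k (br x) y = 0.
Proof. by case: E_EALA => _ _ _ [] + _ _ _ _; apply. Qed.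
Lemma isoroot_non_isolated sigma : isoroot sigma ->
  exists2 alpha, nonisoroot alpha & isroot (alpha + sigma).
Proof. by case: E_EALA => _ _ _ [] _ _ _ + _; apply. Qed.
Lemma root_system_reduced alpha beta : nonisoroot alpha -> isroot beta ->
  ~ inV0 br form h (beta - 2%:R *: alpha).
Proof. by case: E_EALA => _ _ _ [] _ _ _ _; apply. Qed.

Local Notation br0l := (br0l eala_lie).
Local Notation br0r := (br0r eala_lie).
Local Notation brDr := (brDr eala_lie).
Local Notation brZl := (brZl eala_lie).
Local Notation brZr := (brZr eala_lie).
Local Notation brBl := (brBl eala_lie).
Local Notation brC := (brC eala_lie).
Local Notation br_suml := (br_suml eala_lie).
Local Notation br_sumr := (br_sumr eala_lie).
Local Notation br_leibniz := (br_leibniz eala_lie).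
Local Notation formC := (formC eala_form).
Local Notation form_invariant := (form_invariant eala_form).
Local Notation form0l := (form0l eala_form).
Local Notation form0r := (form0r eala_form).
Local Notation formDl := (formDl eala_form).
Local Notation formDr := (formDr eala_form).
Local Notation formZl := (formZl eala_form).
Local Notation formZr := (formZr eala_form).
Local Notation formNr := (formNr eala_form).
Local Notation formBl := (formBl eala_form).
Local Notation form_suml := (form_suml eala_form).
Local Notation form_sumr := (form_sumr eala_form).

Lemma hv_lin a c d : hv (a *: c + d) = a *: hv c + hv d.
Proof.
rewrite /hv scaler_sumr -big_split; apply: eq_bigr => i _.
by rewrite !mxE scalerDl scalerA.
Qed.

Lemma hv0 : hv 0 = 0.
Proof. exact: (lin0 (f := hv) hv_lin). Qed.

Lemma inHhat0_0 m (Q : 'M[C]_(m, n)) : inHhat0 h Q 0.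
Proof. by exists 0; rewrite mul0mx hv0. Qed.

Lemma rootspZD a c x y : rootsp a x -> rootsp a y -> rootsp a (c *: x + y).
Proof. by move=> ax ay i; rewrite brDr brZr ax ay scalerDr !scalerA mulrC. Qed.
Lemma rootsp0 a : rootsp a 0.
Proof. by move=> i; rewrite br0r scaler0. Qed.
Lemma rootspD a x y : rootsp a x -> rootsp a y -> rootsp a (x + y).
Proof. by move=> ax ay; rewrite -[x]scale1r; apply: rootspZD. Qed.
Lemma rootspZ a c x : rootsp a x -> rootsp a (c *: x).
Proof. by move=> ax; rewrite -[_ *: x]addr0; apply/rootspZD/rootsp0. Qed.
Lemma rootspN a x : rootsp a x -> rootsp a (- x).
Proof. by move=> ax; rewrite -scaleN1r; apply: rootspZ. Qed.
Lemma rootsp_sum (I : eqType) (s : seq I) (F : I -> E) a :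
  (forall i, i \in s -> rootsp a (F i)) -> rootsp a (\sum_(i <- s) F i).
Proof.
move=> aF; rewrite big_seq; apply: (big_ind (rootsp a)) => //; first exact: rootsp0.
exact: rootspD.
Qed.
Lemma rootsp_br a b x y : rootsp a x -> rootsp b y -> rootsp (a + b) (br x y).
Proof. by move=> ax b_y i; rewrite br_leibniz ax b_y brZl brZr mxE scalerDl. Qed.

Lemma rootsp_iter a b e y k : rootsp a e -> rootsp b y ->
  rootsp (b + a *+ k) (iter k (br e) y).
Proof.
move=> ae b_y; elim: k => [|k IH] /=; first by rewrite mulr0n addr0.
by rewrite mulrS addrCA; apply: rootsp_br.
Qed.

Lemma rootsp0_hv c : rootsp 0 (hv c).
Proof. by apply/rootsp0_inH; exists c. Qed.

Definition root_eval (b c : 'rV[C]_n) : C := \sum_i c 0 i * b 0 i.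

Lemma br_hv b c y : rootsp b y -> br (hv c) y = root_eval b c *: y.
Proof.
move=> b_y; rewrite /hv br_suml /root_eval scaler_suml; apply: eq_bigr => i _.
by rewrite brZl b_y scalerA.
Qed.

(* Invariance makes [ad (h j)] skew-adjoint, so [(a + b)(h j) (x, y) = 0]. *)
Lemma form_rootsp_eq0 a b x y : rootsp a x -> rootsp b y -> a + b != 0 -> form x y = 0.
Proof.
move=> ax b_y ab_neq0; have [j] := row_neq0_coord ab_neq0; rewrite mxE => abj_neq0.
have : (a 0 j + b 0 j) * form x y = 0.
  have skew : form (br (h j) x) y = - form x (br (h j) y).
    by rewrite brC -scaleN1r formZl form_invariant mulN1r.
  by move: skew; rewrite ax b_y formZl formZr mulrDl => ->; rewrite addNr.
by move/eqP; rewrite mulf_eq0 (negbTE abj_neq0) => /eqP.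
Qed.

Lemma form_rootsp_nondeg x : (forall b y, rootsp b y -> form x y = 0) -> x = 0.
Proof.
move=> x_perp; apply: (form_nondeg eala_form) => w.
have [s [_ s_root ->]] := root_space_decomposition w.
by rewrite form_sumr big_seq big1 // => p /s_root; apply: x_perp.
Qed.

Lemma rootsp_dual a e : rootsp a e -> e != 0 -> exists2 f, rootsp (- a) f & form e f != 0.
Proof.
move=> ae e_neq0; have [//|no_dual] := pselect (exists2 f, rootsp (- a) f & form e f != 0).
case/eqP: e_neq0; apply: form_rootsp_nondeg => b y; have [-> b_y|b_neq b_y] := eqVneq b (- a).
  by have [//|fy_neq0] := eqVneq (form e y) 0; case: no_dual; exists y.
by apply: (form_rootsp_eq0 ae b_y); rewrite addrC addr_eq0.
Qed.

Lemma form_hv c d : form (hv c) (hv d) = (c *m gramH form h *m d^T) 0 0.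
Proof.
have -> : form (hv c) (hv d) = \sum_i \sum_j c 0 i * d 0 j * gramH form h i j.
  rewrite /hv form_suml; apply: eq_bigr => i _; rewrite formZl form_sumr mulr_sumr.
  by apply: eq_bigr => j _; rewrite formZr mxE mulrA.
rewrite mxE; under [RHS]eq_bigr do rewrite !mxE mulr_suml.
rewrite exchange_big; apply: eq_bigr => i _; apply: eq_bigr => j _.
by rewrite mulrAC.
Qed.

Lemma gramH_unit : gramH form h \in unitmx.
Proof.
rewrite -row_free_unit; apply: inj_row_free => v v_gram.
apply: hv_inj; apply: form_rootsp_nondeg => b y; have [-> b_y|b_neq0 b_y] := eqVneq b 0.
  by have [d ->] := (rootsp0_inH y).1 b_y; rewrite form_hv v_gram mul0mx mxE.
by apply: (form_rootsp_eq0 (rootsp0_hv v) b_y); rewrite add0r.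
Qed.

Lemma form_tE_hv b c : form (tE b) (hv c) = root_eval b c.
Proof.
rewrite /tE /tcoord form_hv mulmxKV ?gramH_unit // mxE /root_eval.
by apply: eq_bigr => i _; rewrite mxE mulrC.
Qed.

Lemma tE_lin a x y : tE (a *: x + y) = a *: tE x + tE y.
Proof. by rewrite /tE /tcoord mulmxDl -scalemxAl hv_lin. Qed.

Lemma tE0 : tE 0 = 0.
Proof. exact: (lin0 (f := tE) tE_lin). Qed.
Lemma tED x y : tE (x + y) = tE x + tE y.
Proof. exact: (linD (f := tE) tE_lin). Qed.
Lemma tEZ a x : tE (a *: x) = a *: tE x.
Proof. exact: (linZ (f := tE) tE_lin). Qed.
Lemma tE_sum (I : Type) (s : seq I) (F : I -> 'rV[C]_n) :
  tE (\sum_(i <- s) F i) = \sum_(i <- s) tE (F i).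
Proof. exact: (lin_sum (f := tE) tE_lin). Qed.

Lemma rformC a b : rf a b = rf b a.
Proof. by rewrite /rform formC. Qed.

Lemma rform_linl z a x y : rf (a *: x + y) z = a * rf x z + rf y z.
Proof. by rewrite /rform tE_lin formDl formZl. Qed.
Lemma rform_linr z a x y : rf z (a *: x + y) = a * rf z x + rf z y.
Proof. by rewrite !(rformC z) rform_linl. Qed.

Lemma rform0l z : rf 0 z = 0.
Proof. exact: (slin0 (f := rf^~ z) (rform_linl z)). Qed.
Lemma rformDl x y z : rf (x + y) z = rf x z + rf y z.
Proof. exact: (slinD (f := rf^~ z) (rform_linl z)). Qed.
Lemma rformDr x y z : rf z (x + y) = rf z x + rf z y.
Proof. exact: (slinD (f := rf z) (rform_linr z)). Qed.
Lemma rformZl a x z : rf (a *: x) z = a * rf x z.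
Proof. exact: (slinZ (f := rf^~ z) (rform_linl z)). Qed.
Lemma rformZr a x z : rf z (a *: x) = a * rf z x.
Proof. exact: (slinZ (f := rf z) (rform_linr z)). Qed.
Lemma rformNl x z : rf (- x) z = - rf x z.
Proof. exact: (slinN (f := rf^~ z) (rform_linl z)). Qed.
Lemma rformNr x z : rf z (- x) = - rf z x.
Proof. exact: (slinN (f := rf z) (rform_linr z)). Qed.
Lemma rformNN x : rf (- x) (- x) = rf x x.
Proof. by rewrite rformNl rformNr opprK. Qed.

Lemma br_tE a b y : rootsp b y -> br (tE a) y = rf a b *: y.
Proof. by move=> b_y; rewrite /tE (br_hv _ b_y) /rform formC form_tE_hv. Qed.

Lemma rootsp0_tE a : rootsp 0 (tE a).
Proof. exact: rootsp0_hv. Qed.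

Lemma br_dual_pair a e f : rootsp a e -> rootsp (- a) f -> br e f = form e f *: tE a.
Proof.
move=> ae af; apply/eqP; rewrite -subr_eq0; apply/eqP; apply: form_rootsp_nondeg => b y.
have ef_0 : rootsp 0 (br e f - form e f *: tE a).
  have := rootsp_br ae af; rewrite addrN addrC -scaleNr; exact: rootspZD (rootsp0_tE a).
have [-> b_y|b_neq0 b_y] := eqVneq b 0; last by apply: (form_rootsp_eq0 ef_0 b_y); rewrite add0r.
have [c ->] := (rootsp0_inH y).1 b_y.
rewrite formBl formZl form_tE_hv form_invariant brC (br_hv _ af) formNr formZr.
have -> : root_eval (- a) c = - root_eval a c.
  by rewrite /root_eval -sumrN; apply: eq_bigr => i _; rewrite mxE mulrN.
by rewrite mulNr opprK mulrC subrr.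
Qed.

Definition coroot al := (2%:R / rf al al) *: tE al.

Lemma br_coroot al b y : rootsp b y -> br (coroot al) y = (2%:R / rf al al * rf al b) *: y.
Proof. by move=> b_y; rewrite brZl (br_tE _ b_y) scalerA. Qed.

Lemma nonisorootN al : nonisoroot al -> nonisoroot (- al).
Proof.
case=> [[e ae /eqP e_neq0] al_noniso]; split; last by rewrite rformNN.
have [f af ef_neq0] := rootsp_dual ae e_neq0; exists f => // f0.
by rewrite f0 form0r eqxx in ef_neq0.
Qed.

Lemma nonisoroot_sl2_triple al e : nonisoroot al -> rootsp al e -> e != 0 ->
  exists2 f, rootsp (- al) f &
    [/\ br (coroot al) e = 2%:R *: e, br (coroot al) f = - (2%:R *: f) &
        br e f = coroot al].
Proof.
case=> _ k_neq0 ae e_neq0; have [f' af' ef'_neq0] := rootsp_dual ae e_neq0.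
exists ((2%:R / (rf al al * form e f')) *: f'); first exact: rootspZ.
split.
- by rewrite (br_coroot _ ae) divfK.
- by rewrite (br_coroot _ (rootspZ _ af')) rformNr mulrN divfK // scaleNr.
- by rewrite brZr (br_dual_pair ae af') scalerA invfM mulrA mulfVK.
Qed.

Lemma weight_string (b a : 'rV[C]_n) (p q : nat) : (p <= q)%N ->
  b + a *+ p + (- a) *+ (q - p) = b - (q%:R - 2%:R * p%:R) *: a.
Proof.
move=> le_pq; rewrite -[a *+ p]scaler_nat -[(- a) *+ _]scaler_nat natrB //.
by rewrite scalerN -addrA -scalerBl -scaleNr; congr (_ + _ *: _); ring.
Qed.

Lemma root_reflection al b v : nonisoroot al -> rootsp b v -> v != 0 ->
  exists m : int, 2%:R / rf al al * rf al b = m%:~R /\ isroot (b - m%:~R *: al).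
Proof.
move=> al_noniso bv v_neq0; have [[e ae /eqP e_neq0] _] := al_noniso.
have [f af [hh_e hh_f e_f]] := nonisoroot_sl2_triple al_noniso ae e_neq0.
have e_nil y := ad_nilpotent y al_noniso ae.
have f_nil y := ad_nilpotent y (nonisorootN al_noniso) af.
have [p [q [le_pq [[M_pq w_neq0]|[M_pq w_neq0]]]]] :=
  sl2_reflection eala_lie hh_e hh_f e_f e_nil f_nil v_neq0 (br_coroot al bv).
- exists (q%:Z - 2 * p%:Z); rewrite intrB intrM; split=> //.
  exists (iter (q - p) (br f) (iter p (br e) v)); last exact/eqP.
  by rewrite -weight_string //; apply/rootsp_iter/rootsp_iter.
- exists (- (q%:Z - 2 * p%:Z)); rewrite intrN intrB intrM; split; first by rewrite -M_pq opprK.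
  exists (iter (q - p) (br e) (iter p (br f) v)); last exact/eqP.
  rewrite scaleNr -scalerN -weight_string // opprK.
  by apply/rootsp_iter/rootsp_iter.
Qed.

(* The root [sig - m al] is again isotropic, so [m != 0] would put [al] in
   [V^0], against reducedness. *)
Lemma rform_isoroot_nonisoroot sig al : isoroot sig -> nonisoroot al -> rf sig al = 0.
Proof.
move=> sig_iso al_noniso; have [[v sv /eqP v_neq0] sig_sig] := sig_iso.
have [m [m_def sig'_root]] := root_reflection al_noniso sv v_neq0.
have [al_root k_neq0] := al_noniso; set k := rf al al in k_neq0 m_def.
have al_sig : rf al sig = m%:~R * k / 2%:R by rewrite -m_def; field.
have [m0|m_neq0] := eqVneq m 0; first by rewrite rformC al_sig m0 !mul0r.
exfalso; apply: (root_system_reduced al_noniso al_root).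
set sig' := sig - m%:~R *: al in sig'_root.
have sig'_iso : isoroot sig'.
  split=> //; rewrite /sig' rformDl !rformDr !rformNl !rformNr !rformZl !rformZr.
  by rewrite sig_sig -/k (rformC sig al) al_sig; field.
have m_neq0R : (m%:~R : R) != 0 by rewrite intr_eq0.
exists [:: (- 1 / m%:~R, sig); (1 / m%:~R, sig')]; split.
  by move=> p; rewrite !inE => /orP [/eqP ->|/eqP ->].
rewrite big_cons big_seq1 /= /sig' !rmorphM rmorphN /= rmorphV ?unitfE // rmorph1 rmorph_int.
rewrite scalerBr scalerA addrA -scalerDl mulNr addNr scale0r add0r div1r mulVf ?intr_eq0 //.
by rewrite scale1r scaler_nat mulr2n opprD addrA subrr add0r.
Qed.

Local Notation inEc := (inEc br form h).
Local Notation inZEc := (inZEc br form h).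

Lemma nonisoroot_neq0 a : nonisoroot a -> a != 0.
Proof. by case=> _; apply: contraNneq => ->; rewrite rform0l. Qed.

Lemma inV0_isoroot_diff s1 s2 : isoroot s1 -> isoroot s2 -> inV0 br form h (s1 - s2).
Proof.
move=> s1_iso s2_iso; exists [:: (1, s1); (-1, s2)]; split.
  by move=> p; rewrite !inE => /orP [/eqP ->|/eqP ->].
by rewrite big_cons big_seq1 /= rmorphN rmorph1 scale1r scaleN1r.
Qed.

Lemma nonisoroot_not_isoroot_diff s1 s2 : isoroot s1 -> isoroot s2 -> ~ nonisoroot (s1 - s2).
Proof.
move=> s1_iso s2_iso al_noniso; have [al_root _] := al_noniso.
apply: (root_system_reduced al_noniso al_root).
by rewrite scaler_nat mulr2n opprD addrA subrr add0r opprB; apply: inV0_isoroot_diff.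
Qed.

Lemma inEcN x : inEc x -> inEc (- x).
Proof. by move=> Ex; rewrite -scaleN1r; apply: Ec_scale. Qed.
Lemma inEcB x y : inEc x -> inEc y -> inEc (x - y).
Proof. by move=> Ex Ey; apply/Ec_add/inEcN. Qed.
Lemma inEc_sum (I : eqType) (s : seq I) (F : I -> E) :
  (forall i, i \in s -> inEc (F i)) -> inEc (\sum_(i <- s) F i).
Proof.
move=> EF; rewrite big_seq; apply: (big_ind inEc) => //; first exact: Ec_zero.
exact: Ec_add.
Qed.

(* When [b + a] is isotropic, [b] cannot be: [a] is not a difference of
   isotropic roots. *)
Lemma inEc_br_rootsp b a u x : rootsp b u -> nonisoroot a -> rootsp a x -> inEc (br u x).
Proof.
move=> bu a_noniso ax; have [->|ux_neq0] := eqVneq (br u x) 0; first exact: Ec_zero.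
have ab_root : isroot (b + a) by exists (br u x); [exact: rootsp_br | exact/eqP].
have [ab_iso|ab_noniso] := eqVneq (rf (b + a) (b + a)) 0; last exact: Ec_gen (rootsp_br bu ax).
have b_root : isroot b.
  by exists u => // u0; rewrite u0 br0l eqxx in ux_neq0.
have [b_iso|b_noniso] := eqVneq (rf b b) 0.
  case: (nonisoroot_not_isoroot_diff (conj ab_root ab_iso) (conj b_root b_iso)).
  by rewrite [b + a]addrC addrK.
exact: Ec_br (Ec_gen (conj b_root b_noniso) bu) (Ec_gen a_noniso ax).
Qed.

Lemma inEc_brr w y : inEc y -> inEc (br w y).
Proof.
move=> Ey; elim: Ey w => [a x a_noniso ax||x y' _ IHx _ IHy|c x _ IHx|x y' Ex IHx Ey' IHy] w.
- have [s [_ s_root ->]] := root_space_decomposition w.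
  by rewrite br_suml; apply: inEc_sum => p /s_root pr; apply: inEc_br_rootsp pr a_noniso ax.
- by rewrite br0r; apply: Ec_zero.
- by rewrite brDr; apply: Ec_add.
- by rewrite brZr; apply: Ec_scale.
- by rewrite br_leibniz; apply: Ec_add; apply: Ec_br.
Qed.

Lemma inEc_brl y w : inEc y -> inEc (br y w).
Proof. by move=> Ey; rewrite brC; apply/inEcN/inEc_brr. Qed.

Lemma center_core_orthogonal z y : inZEc z -> inEc y -> form z y = 0.
Proof.
case=> _ z_central; elim=> [a x a_noniso ax||x y' _ IHx _ IHy|c x _ IHx|x y' Ex _ _ _].
- have [j aj_neq0] := row_neq0_coord (nonisoroot_neq0 a_noniso).
  have : a 0 j * form z x = 0.
    by rewrite -formZr -ax brC formNr -form_invariant z_central ?form0l ?oppr0 //; apply: Ec_gen ax.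
  by move/eqP; rewrite mulf_eq0 (negbTE aj_neq0) => /eqP.
- by rewrite form0r.
- by rewrite formDr IHx IHy addr0.
- by rewrite formZr IHx mulr0.
- by rewrite -form_invariant z_central // form0l.
Qed.

Lemma core_radical_central x : inEc x -> (forall y, inEc y -> form x y = 0) -> inZEc x.
Proof.
move=> Ex x_rad; split=> // y Ey; apply: (form_nondeg eala_form) => w.
by rewrite form_invariant; apply/x_rad/inEc_brl.
Qed.

Section AdHStableSubspace.
Variable P : E -> Prop.
Hypothesis PB : forall x y, P x -> P y -> P (x - y).
Hypothesis PZ : forall c x, P x -> P (c *: x).
Hypothesis P_adh : forall i x, P x -> P (br (h i) x).

(* Applying [ad (h j) - b(h j)] kills the [b]-component and keeps the others
   up to nonzero factors, so induction on the number of components works. *)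
Lemma stable_weight_component (s : seq ('rV[C]_n * E)) a v :
  (forall p, p \in s -> rootsp p.1 p.2 /\ p.1 != a) -> rootsp a v ->
  P (v + \sum_(p <- s) p.2) -> P v.
Proof.
have [k] := ubnP (size s); elim: k => // k IH in s v *.
case: s => [|[b u] s] /= size_s s_root av; first by rewrite big_nil addr0.
have [bu b_neq_a] := s_root _ (mem_head _ _).
have {}s_root p : p \in s -> rootsp p.1 p.2 /\ p.1 != a.
  by move=> ps; apply: s_root; rewrite inE ps orbT.
have [j] : exists j, (a - b) 0 j != 0 by apply: row_neq0_coord; rewrite subr_eq0 eq_sym.
rewrite !mxE => abj_neq0 Pvs.
pose c (p : 'rV[C]_n * E) := p.1 0 j - b 0 j.
suff : P (c (a, v) *: v) by move/(PZ (c (a, v))^-1); rewrite scalerA mulVf ?scale1r.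
apply: (IH [seq (p.1, c p *: p.2) | p <- s]).
- by rewrite size_map.
- move=> _ /mapP [q qs ->] /=; have [q_root q_neq] := s_root q qs.
  by split; [apply: rootspZ | ].
- exact: rootspZ.
set y := v + \sum_(p <- (b, u) :: s) p.2 in Pvs.
have -> : c (a, v) *: v + \sum_(p <- [seq (p.1, c p *: p.2) | p <- s]) p.2 =
          br (h j) y - b 0 j *: y.
  have br_sum : \sum_(p <- s) br (h j) p.2 = \sum_(p <- s) p.1 0 j *: p.2.
    by apply: eq_big_seq => p /s_root [pr _]; apply: pr.
  rewrite /y big_cons /= big_map !brDr br_sumr br_sum av bu !scalerDr scaler_sumr /=.
  rewrite (addrCA (a 0 j *: v)) (addrCA (b 0 j *: v)) opprD addrACA subrr add0r.
  rewrite opprD addrACA /c scalerBl.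
  by congr (_ + _); rewrite -sumrB; apply: eq_bigr => p _; rewrite scalerBl.
by apply: PB; [apply: P_adh | apply: PZ].
Qed.

Lemma stable_root_components x : P x -> exists s : seq ('rV[C]_n * E),
  (forall p, p \in s -> rootsp p.1 p.2 /\ P p.2) /\ x = \sum_(p <- s) p.2.
Proof.
move=> Px; have [s [s_uniq s_root x_def]] := root_space_decomposition x.
exists s; split=> // p ps; split; first exact: s_root.
elim: s x s_uniq s_root x_def Px p ps => [//|q s IH] x /= /andP [q_notin s_uniq] qs_root.
rewrite big_cons => x_def Px.
have q_root : rootsp q.1 q.2 by apply: qs_root; apply: mem_head.
have s_root p : p \in s -> rootsp p.1 p.2 by move=> ps; apply: qs_root; rewrite inE ps orbT.
have Pq : P q.2.
  apply: (stable_weight_component (s := s) _ q_root); last by rewrite -x_def.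
  move=> p ps; split; first exact: s_root.
  by apply: contraNneq q_notin => <-; apply: map_f.
move=> p; rewrite inE => /orP [/eqP -> //|ps].
by apply: (IH (x - q.2)) => //; [rewrite x_def addrC addKr | apply: PB].
Qed.

End AdHStableSubspace.

Lemma root_components_independent s a v :
  (forall p, p \in s -> rootsp p.1 p.2 /\ p.1 != a) -> rootsp a v ->
  v + \sum_(p <- s) p.2 = 0 -> v = 0.
Proof.
apply: (stable_weight_component (P := fun x => x = 0)).
- by move=> x y -> ->; rewrite subrr.
- by move=> c x ->; rewrite scaler0.
- by move=> i x ->; rewrite br0r.
Qed.

Lemma core_root_components x : inEc x -> exists s : seq ('rV[C]_n * E),
  (forall p, p \in s -> rootsp p.1 p.2 /\ inEc p.2) /\ x = \sum_(p <- s) p.2.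
Proof.
apply: stable_root_components => [|c x'|i x']; [exact: inEcB | exact: Ec_scale | exact: inEc_brr].
Qed.

Lemma center_root_components x : inZEc x -> exists s : seq ('rV[C]_n * E),
  (forall p, p \in s -> rootsp p.1 p.2 /\ inZEc p.2) /\ x = \sum_(p <- s) p.2.
Proof.
apply: stable_root_components.
- move=> x' y [Ex x_central] [Ey y_central]; split; first exact: inEcB.
  by move=> w Ew; rewrite brBl x_central // y_central // subrr.
- move=> c x' [Ex x_central]; split; first exact: Ec_scale.
  by move=> w Ew; rewrite brZl x_central // scaler0.
- move=> i x' [Ex x_central]; split; first exact: inEc_brr.
  move=> w Ew; have := br_leibniz (h i) x' w.
  by rewrite x_central // br0r x_central ?addr0 //; apply: inEc_brr.
Qed.

Lemma center_inH_of_root_spaces :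
  (forall a v, a != 0 -> rootsp a v -> inZEc v -> v = 0) ->
  forall z, inZEc z -> inH h z.
Proof.
move=> center_root z Zz; have [s [s_root ->]] := center_root_components Zz.
apply/rootsp0_inH/rootsp_sum => p /s_root [p_root Zp].
have [p0|p_neq0] := eqVneq p.1 0; first by rewrite p0 in p_root.
by rewrite (center_root _ _ p_neq0 p_root Zp); apply: rootsp0.
Qed.

Section TSpan.
Variable P : 'rV[C]_n -> Prop.
Local Notation tspan := (in_tspan form h P).

Lemma tspan_ind (Q : E -> Prop) : Q 0 -> (forall x y, Q x -> Q y -> Q (x + y)) ->
  (forall c a, P a -> Q (c *: tE a)) -> forall x, tspan x -> Q x.
Proof.
move=> Q0 QD QP _ [s [sP ->]]; rewrite big_seq; apply: (big_ind Q) => // p ps.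
exact/QP/sP.
Qed.

Lemma tspan0 : tspan 0.
Proof. by exists [::]; rewrite big_nil. Qed.

Lemma tspanD x y : tspan x -> tspan y -> tspan (x + y).
Proof.
case=> s1 [s1P ->] [s2 [s2P ->]]; exists (s1 ++ s2); rewrite big_cat; split=> // p.
by rewrite mem_cat => /orP [/s1P|/s2P].
Qed.

Lemma tspanZ c x : tspan x -> tspan (c *: x).
Proof.
case=> s [sP ->]; exists [seq (c * p.1, p.2) | p <- s]; split.
  by move=> _ /mapP [q qs ->] /=; apply: sP.
by rewrite big_map scaler_sumr; apply: eq_bigr => p _; rewrite scalerA.
Qed.

Lemma tspanN x : tspan x -> tspan (- x).
Proof. by rewrite -scaleN1r; apply: tspanZ. Qed.

Lemma tspan_tE a : P a -> tspan (tE a).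
Proof.
move=> Pa; exists [:: (1, a)]; rewrite big_seq1 scale1r; split=> // p.
by rewrite inE => /eqP ->.
Qed.

Lemma tspan_rootsp0 x : tspan x -> rootsp 0 x.
Proof.
move=> tx; elim/tspan_ind: tx => [|x' y|c a _]; [exact: rootsp0 | exact: rootspD |].
exact/rootspZ/rootsp0_tE.
Qed.

End TSpan.

Lemma tspan_sub (P1 P2 : 'rV[C]_n -> Prop) x :
  (forall a, P1 a -> in_tspan form h P2 (tE a)) ->
  in_tspan form h P1 x -> in_tspan form h P2 x.
Proof.
move=> P12 tx; elim/tspan_ind: tx => [|x' y|c a /P12]; [exact: tspan0 | exact: tspanD |].
exact: tspanZ.
Qed.

Lemma inEhat_core m (Q : 'M[C]_(m, n)) x : inEc x -> inEhat br form h Q x.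
Proof.
move=> Ex; exists 0, 0, x; rewrite !add0r; split=> //; [exact: tspan0 | exact: inHhat0_0].
Qed.

(* A central root vector of nonzero weight is orthogonal to [E_c] and to [H]. *)
Lemma nondeg_Ehat_center_inH m (Q : 'M[C]_(m, n)) :
  nondeg_on form (inEhat br form h Q) -> forall z, inZEc z -> inH h z.
Proof.
move=> Ehat_nondeg; apply: center_inH_of_root_spaces => a v a_neq0 av Zv.
apply: Ehat_nondeg; first by apply: inEhat_core; case: Zv.
move=> _ [t [u [c [Hc_t [d ->] Ec ->]]]].
rewrite !formDr (center_core_orthogonal Zv Ec) addr0.
rewrite (form_rootsp_eq0 av (tspan_rootsp0 Hc_t)) ?addr0 ?add0r //.
by rewrite (form_rootsp_eq0 av (rootsp0_hv (d *m Q))) ?addr0.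
Qed.

Lemma center_rootsp_nonisoroot_eq0 a v : nonisoroot a -> rootsp a v -> inZEc v -> v = 0.
Proof.
move=> a_noniso av Zv; apply: form_rootsp_nondeg => b y b_y.
have [ab0|ab_neq0] := eqVneq (a + b) 0; last exact: form_rootsp_eq0 av b_y ab_neq0.
apply: (center_core_orthogonal Zv); apply: Ec_gen b_y.
have -> : b = - a by apply/eqP; rewrite -addr_eq0 addrC ab0.
exact: nonisorootN.
Qed.

Lemma nondeg_Eiso_center_inH :
  nondeg_on form (inEiso br form h) -> forall z, inZEc z -> inH h z.
Proof.
move=> Eiso_nondeg; apply: center_inH_of_root_spaces => a v a_neq0 av Zv.
have [//|v_neq0] := eqVneq v 0.
have a_root : isroot a by exists v => //; apply/eqP.
have [a_iso|a_noniso] := eqVneq (rf a a) 0; last exact: center_rootsp_nonisoroot_eq0 av Zv.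
apply: Eiso_nondeg => [|y [Ey _]]; last exact: center_core_orthogonal.
split; first by case: Zv.
by exists [:: (a, v)]; rewrite big_seq1; split=> // p; rewrite inE => /eqP ->.
Qed.

Lemma Eiso_radical_core_orthogonal x : inEiso br form h x ->
  (forall y, inEiso br form h y -> form x y = 0) -> forall y, inEc y -> form x y = 0.
Proof.
case=> _ [s [s_iso ->]] x_rad y /core_root_components [t [t_root ->]].
rewrite form_sumr big_seq big1 // => q /t_root [q_root Eq].
have [->|q2_neq0] := eqVneq q.2 0; first by rewrite form0r.
have [/andP [q1_neq0 /eqP q_iso]|q_not_iso] := boolP ((q.1 != 0) && (rf q.1 q.1 == 0)).
  apply: x_rad; split=> //; exists [:: q]; rewrite big_seq1; split=> // p.
  by rewrite inE => /eqP -> /=; split=> //; split=> //; exists q.2 => //; apply/eqP.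
rewrite form_suml big_seq big1 // => p /s_iso [[_ p_iso] p_neq0 p_root].
apply: (form_rootsp_eq0 p_root q_root); apply: contra q_not_iso => /eqP pq0.
have -> : q.1 = - p.1 by apply/eqP; rewrite -addr_eq0 addrC pq0.
by rewrite rformNN p_iso eqxx oppr_eq0 p_neq0.
Qed.

Lemma nonzero_weights_sum_inH_eq0 (s : seq ('rV[C]_n * E)) :
  (forall p, p \in s -> rootsp p.1 p.2 /\ p.1 != 0) ->
  inH h (\sum_(p <- s) p.2) -> \sum_(p <- s) p.2 = 0.
Proof.
move=> s_root /rootsp0_inH sum_0; apply/eqP; rewrite -oppr_eq0; apply/eqP.
by apply: (root_components_independent s_root (rootspN sum_0)); rewrite addNr.
Qed.

Lemma form_rootsp0_nonzero_weights z (s : seq ('rV[C]_n * E)) : rootsp 0 z ->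
  (forall p, p \in s -> rootsp p.1 p.2 /\ p.1 != 0) -> form z (\sum_(p <- s) p.2) = 0.
Proof.
move=> z0 s_root; rewrite form_sumr big_seq big1 // => p /s_root [p_root p_neq0].
by apply: (form_rootsp_eq0 z0 p_root); rewrite add0r.
Qed.

Lemma Eiso_inH_eq0 x : inEiso br form h x -> inH h x -> x = 0.
Proof.
case=> _ [s [s_iso ->]]; apply: nonzero_weights_sum_inH_eq0 => p.
by case/s_iso.
Qed.

Lemma center_inH_nondeg_Eiso :
  (forall z, inZEc z -> inH h z) -> nondeg_on form (inEiso br form h).
Proof.
move=> center_H x Eiso_x x_rad; apply: Eiso_inH_eq0 => //; apply: center_H.
by apply: core_radical_central; [case: Eiso_x | apply: Eiso_radical_core_orthogonal].
Qed.

Local Notation inHc := (inHc br form h).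
Local Notation inH0 := (inH0 br form h).

Lemma isoroot_shift_nonisoroot sig : isoroot sig ->
  exists2 al, nonisoroot al & nonisoroot (al + sig).
Proof.
move=> sig_iso; have [al al_noniso al_sig_root] := isoroot_non_isolated sig_iso.
exists al => //; split=> //; have [_ k_neq0] := al_noniso; have [_ sig_sig] := sig_iso.
rewrite rformDl !rformDr sig_sig (rformC al sig) (rform_isoroot_nonisoroot sig_iso al_noniso).
by rewrite !addr0.
Qed.

Lemma inHc_tE_isoroot sig : isoroot sig -> inHc (tE sig).
Proof.
move=> /isoroot_shift_nonisoroot [al al_noniso al_sig_noniso].
have -> : tE sig = tE (al + sig) - tE al by rewrite tED addrC addKr.
by apply: tspanD; [apply: tspan_tE | apply/tspanN/tspan_tE].
Qed.

Lemma inH0_inHc x : inH0 x -> inHc x.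
Proof. exact/tspan_sub/inHc_tE_isoroot. Qed.

Lemma inHc_br_dual b u w : rootsp b u -> rootsp (- b) w -> inHc (br u w).
Proof.
move=> bu bw; rewrite (br_dual_pair bu bw).
have [->|u_neq0] := eqVneq u 0; first by rewrite form0l scale0r; apply: tspan0.
have b_root : isroot b by exists u => //; apply/eqP.
apply: tspanZ; have [b_iso|b_noniso] := eqVneq (rf b b) 0.
  exact: inHc_tE_isoroot.
exact: tspan_tE.
Qed.

Lemma core_decomposition c : inEc c -> exists s : seq ('rV[C]_n * E),
  (forall p, p \in s -> [/\ rootsp p.1 p.2, inEc p.2 & (p.1 = 0 -> inHc p.2)]) /\
  c = \sum_(p <- s) p.2.
Proof.
elim=> [a x a_noniso ax||x y _ [s1 [s1_root ->]] _ [s2 [s2_root ->]]|c' x _ [s [s_root ->]]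
       |x y _ [s1 [s1_root ->]] _ [s2 [s2_root ->]]].
- exists [:: (a, x)]; rewrite big_seq1; split=> // p; rewrite inE => /eqP -> /=.
  split=> //; first exact: Ec_gen ax.
  by move=> a0; move: (nonisoroot_neq0 a_noniso); rewrite a0 eqxx.
- by exists [::]; rewrite big_nil.
- exists (s1 ++ s2); rewrite big_cat; split=> // p.
  by rewrite mem_cat => /orP [/s1_root|/s2_root].
- exists [seq (p.1, c' *: p.2) | p <- s]; rewrite big_map scaler_sumr; split=> //.
  move=> _ /mapP [q /s_root [q_root Eq q_Hc] ->] /=; split.
  + exact: rootspZ.
  + exact: Ec_scale.
  + by move=> /q_Hc; apply: tspanZ.
- exists [seq (p.1 + q.1, br p.2 q.2) | p <- s1, q <- s2]; split.
    move=> _ /allpairsP [[p q] [/s1_root [p_root Ep _] /s2_root [q_root Eq _] ->]] /=.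
    split; [exact: rootsp_br | exact: Ec_br |].
    move=> /eqP; rewrite addrC addr_eq0 => /eqP q_eq; rewrite q_eq in q_root.
    exact: inHc_br_dual p_root q_root.
  rewrite big_allpairs_dep /= br_suml; apply: eq_bigr => p _.
  by rewrite br_sumr.
Qed.

Lemma core_split c : inEc c -> exists c0 (s : seq ('rV[C]_n * E)),
  [/\ inHc c0, forall p, p \in s -> [/\ rootsp p.1 p.2, p.1 != 0 & inEc p.2] &
      c = c0 + \sum_(p <- s) p.2].
Proof.
case/core_decomposition => s [s_root ->].
exists (\sum_(p <- s | p.1 == 0) p.2), [seq p <- s | p.1 != 0]; split.
- rewrite big_seq_cond; apply: (big_ind inHc); [exact: tspan0 | exact: tspanD |].
  by move=> p /andP [/s_root [_ _ p_Hc] /eqP /p_Hc].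
- by move=> p; rewrite mem_filter => /andP [p_neq0 /s_root [p_root Ep _]].
- by rewrite big_filter [LHS](bigID (fun p => p.1 == 0)).
Qed.

Section DotRootSystem.
Variables (Rd : seq 'rV[C]_n) (m : nat) (Q : 'M[C]_(m, n)).
Hypothesis Rd_dotR : is_dotR br form h Rd.
Hypothesis Q_hatH0 : is_hatH0 br form h Rd Q.

Local Notation inHdot := (inHdot form h Rd).
Local Notation inHhat0 := (inHhat0 h Q).

Definition inHR x := exists t u, [/\ inHc t, inHhat0 u & x = t + u].

Lemma inH0_tE_inV0 v : inV0 br form h v -> inH0 (tE v).
Proof.
case=> s [s_iso ->]; rewrite tE_sum big_seq.
apply: (big_ind inH0); [exact: tspan0 | exact: tspanD |].
by move=> p ps; rewrite tEZ; apply/tspanZ/tspan_tE/s_iso.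
Qed.

Lemma inHdot_inHc x : inHdot x -> inHc x.
Proof.
have [[_ Rd_pos _] Rd_root _ _] := Rd_dotR.
apply: tspan_sub => a Rd_a; have [->|a_neq0] := eqVneq a 0; first by rewrite tE0; apply: tspan0.
by apply: tspan_tE; split; [apply: Rd_root | apply: lt0r_neq0; apply: Rd_pos].
Qed.

Lemma inHc_split t : inHc t -> exists td t0, [/\ inHdot td, inH0 t0 & t = td + t0].
Proof.
have [_ _ Rd_cover _] := Rd_dotR.
move=> Hc_t; elim/tspan_ind: Hc_t
  => [|x y [xd [x0 [Hxd Hx0 ->]]] [yd [y0 [Hyd Hy0 ->]]]|c a [a_root _]].
- by exists 0, 0; rewrite addr0; split=> //; apply: tspan0.
- by exists (xd + yd), (x0 + y0); rewrite addrACA; split=> //; apply: tspanD.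
- have [d Rd_d ad_V0] := Rd_cover a a_root.
  exists (c *: tE d), (c *: tE (a - d)); rewrite -scalerDr -tED [d + _]addrC subrK.
  by split=> //; apply: tspanZ; [apply: tspan_tE | apply: inH0_tE_inV0].
Qed.

Lemma form_inH0_inHc s t : inH0 s -> inHc t -> form s t = 0.
Proof.
move=> H0_s Hc_t; elim/tspan_ind: H0_s => [|x y xt yt|c sig sig_iso].
- exact: form0l.
- by rewrite formDl xt yt addr0.
rewrite formZl; elim/tspan_ind: Hc_t => [||d al al_noniso].
- by rewrite form0r mulr0.
- by move=> x' y xt yt; rewrite formDr mulrDr xt yt addr0.
by rewrite formZr -[form _ _]/(rf sig al) rform_isoroot_nonisoroot // !mulr0.
Qed.

Lemma Hdot_nondeg : nondeg_on form inHdot.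
Proof.
have [[_ Rd_pos Rd_refl] _ _ _] := Rd_dotR.
move=> _ [s [s_Rd ->]] td_perp; set u := \sum_(p <- s) p.1 *: p.2.
have td_u : \sum_(p <- s) p.1 *: tE p.2 = tE u.
  by rewrite tE_sum; apply: eq_bigr => p _; rewrite tEZ.
rewrite td_u; suff -> : u = 0 by rewrite tE0.
apply: (span_orthogonal_eq0 (rf := rf) rform_linl (S := Rd)).
- by move=> b Rd_b b_neq0; apply/lt0r_neq0/Rd_pos.
- by move=> a b Rd_a Rd_b b_neq0; case: (Rd_refl a b Rd_a Rd_b b_neq0).
- by exists s.
by move=> b Rd_b; rewrite /rform -td_u; apply/td_perp/tspan_tE.
Qed.

Lemma HR_nondeg : nondeg_on form inHR.
Proof.
have [hat_Hdot _ hat_iso _ H0hat_nondeg] := Q_hatH0.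
move=> _ [t [b [Hc_t hat_b ->]]] x_rad.
have [td [t0 [Hdot_td H0_t0 t_def]]] := inHc_split Hc_t; rewrite t_def in x_rad *.
have Hc_td := inHdot_inHc Hdot_td; have Hc_t0 := inH0_inHc H0_t0.
have x_Hc t' : inHc t' -> form (td + t0 + b) t' = 0.
  by move=> Hc_t'; apply: x_rad; exists t', 0; rewrite addr0; split=> //; apply: inHhat0_0.
have x_hat u : inHhat0 u -> form (td + t0 + b) u = 0.
  by move=> hat_u; apply: x_rad; exists 0, u; rewrite add0r; split=> //; apply: tspan0.
have Hc_H0 t' s : inHc t' -> inH0 s -> form t' s = 0.
  by move=> Hc_t' H0_s; rewrite formC; apply: form_inH0_inHc.
have b0 : b = 0.
  apply: H0hat_nondeg => [|_ [s [u [H0_s hat_u ->]]]].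
    by exists 0, b; rewrite add0r; split=> //; apply: tspan0.
  rewrite formDr (hat_iso b u) // addr0; have := x_Hc s (inH0_inHc H0_s).
  by rewrite !formDl (Hc_H0 td s Hc_td H0_s) (Hc_H0 t0 s Hc_t0 H0_s) !add0r.
have t00 : t0 = 0.
  apply: H0hat_nondeg => [|_ [s [u [H0_s hat_u ->]]]].
    by exists t0, 0; rewrite addr0; split=> //; apply: inHhat0_0.
  rewrite formDr (Hc_H0 t0 s Hc_t0 H0_s) add0r; have := x_hat u hat_u.
  by rewrite b0 addr0 formDl (formC td) hat_Hdot // add0r.
rewrite b0 t00 !addr0; apply: Hdot_nondeg => // t' Hdot_t'.
by have := x_Hc t' (inHdot_inHc Hdot_t'); rewrite b0 t00 !addr0.
Qed.

(* Split [y = y0 + yN] with [y0] in [H_c]: then [yN = - y0 + y] lies in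
   [\hat E], and [y0] is orthogonal to root vectors of nonzero weight. *)
Lemma Ehat_radical_core_orthogonal z (s : seq ('rV[C]_n * E)) : rootsp 0 z ->
  (forall p, p \in s -> [/\ rootsp p.1 p.2, p.1 != 0 & inEc p.2]) ->
  (forall y, inEhat br form h Q y -> form (z + \sum_(p <- s) p.2) y = 0) ->
  forall y, inEc y -> form (\sum_(p <- s) p.2) y = 0.
Proof.
move=> z0 s_root x_rad y Ey; have [y0 [t [Hc_y0 t_root y_def]]] := core_split Ey.
have s_root' p : p \in s -> rootsp p.1 p.2 /\ p.1 != 0 by case/s_root.
have t_root' p : p \in t -> rootsp p.1 p.2 /\ p.1 != 0 by case/t_root.
rewrite y_def formDr formC (form_rootsp0_nonzero_weights (tspan_rootsp0 Hc_y0) s_root').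
rewrite add0r; have := x_rad (\sum_(p <- t) p.2).
rewrite formDl (form_rootsp0_nonzero_weights z0 t_root') add0r; apply.
exists (- y0), 0, y; split; [exact: tspanN | exact: inHhat0_0 | exact: Ey |].
by rewrite addr0 y_def addKr.
Qed.

Lemma center_inH_nondeg_Ehat :
  (forall z, inZEc z -> inH h z) -> nondeg_on form (inEhat br form h Q).
Proof.
move=> center_H _ [a [b [c [Hc_a hat_b Ec_c ->]]]] x_rad.
have [c0 [s [Hc_c0 s_root c_def]]] := core_split Ec_c.
have z0 : rootsp 0 (a + b + c0).
  have [d ->] := hat_b; apply: rootspD (tspan_rootsp0 Hc_c0).
  exact: rootspD (tspan_rootsp0 Hc_a) (rootsp0_hv _).
have N0 : \sum_(p <- s) p.2 = 0.
  apply: nonzero_weights_sum_inH_eq0 => [p /s_root []//|]; apply: center_H.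
  apply: core_radical_central; first by apply: inEc_sum => p /s_root [].
  by apply: (Ehat_radical_core_orthogonal z0 s_root) => y; rewrite -addrA -c_def; apply: x_rad.
rewrite c_def N0 addr0 addrAC in x_rad *.
apply: HR_nondeg => [|_ [t [u [Hc_t hat_u ->]]]].
  by exists (a + c0), b; split=> //; apply: tspanD.
by apply: x_rad; exists t, u, 0; rewrite addr0; split=> //; apply: Ec_zero.
Qed.

End DotRootSystem.
End RootSpaces.

Unset Implicit Arguments.

Theorem lemma4p8 (R : realType) (E : lmodType R[i]) (br : E -> E -> E)
    (form : E -> E -> R[i]) (n : nat) (h : 'I_n -> E)
    (Rd : seq 'rV[R[i]]_n) (m : nat) (Q : 'M[R[i]]_(m, n)) :
  is_EALA br form h ->
  is_dotR br form h Rd ->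
  is_hatH0 br form h Rd Q ->
  [/\ nondeg_on form (inEhat br form h Q) <-> nondeg_on form (inEiso br form h),
      nondeg_on form (inEiso br form h) <->
        (forall x, inZEc br form h x -> inH h x) &
      (forall x, inZEc br form h x -> inH h x) <->
        nondeg_on form (inEhat br form h Q)].
Proof.
move=> E_EALA Rd_dotR Q_hatH0.
have a_to_c := nondeg_Ehat_center_inH E_EALA (Q := Q).
have b_to_c := nondeg_Eiso_center_inH E_EALA.
have c_to_b := center_inH_nondeg_Eiso E_EALA.
have c_to_a := center_inH_nondeg_Ehat E_EALA Rd_dotR Q_hatH0.
split; split.
- by move/a_to_c/c_to_b.
- by move/b_to_c/c_to_a.
- exact: b_to_c.
- exact: c_to_b.
- exact: c_to_a.
- exact: a_to_c.
Qed.
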